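(* Let $z\ge1$ be an integer and $0<\overline\delta\le\tfrac12$. Consider the perfect binary tree of depth $z-1$: its nodes at depth $y\in\{0,\dots,z-1\}$ are the binary strings $v=(j_1,\dots,j_y)$ (the root is the empty string), and the ancestors of $v$ are its prefixes. Let $(B_v)_v$ be independent $\{0,1\}$-valued random variables with $\Pr(B_v=1)\le\overline\delta^{\,2^{z-y(v)}}$, where $y(v)$ is the depth of $v$. Define $X_v=2$ if $B_u=1$ for some strict ancestor $u$ of $v$; $X_v=1$ if $B_u=0$ for all strict ancestors $u$ of $v$ and $B_v=1$; and $X_v=0$ otherwise. For a set $\overline T$ of nodes define its node weight $W(\overline T)$ as the number of leaves (nodes of depth $z-1$) having an ancestor-or-self in $\overline T$. Let $\overline T$ be a set of nodes no two distinct elements of which are in ancestor/descendant relation. Then $$\Pr\bigl(X_v\in\{1,2\}\ \text{for all }v\in\overline T\bigr)\le4\cdot4^{|\overline T|}\,\overline\delta^{\,2W(\overline T)}.$$ In particular, if $\overline T$ consists of leaves only, then $$\Pr\bigl(X_v\in\{1,2\}\ \text{for all }v\in\overline T\bigr)\le(2\overline\delta)^{2|\overline T|}.$$ *)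

From HB Require Import structures.
From mathcomp Require Import all_boot all_order all_algebra.
Set Implicit Arguments. Unset Strict Implicit. Unset Printing Implicit Defensive.
Import Order.TTheory GRing.Theory Num.Theory.
Local Open Scope ring_scope.

(* Nodes of the perfect binary tree of depth z-1: binary strings of
   length y in {0,...,z-1}, packaged as a dependent pair (y, y-tuple). *)
Definition node (z : nat) := {y : 'I_z & (nat_of_ord y).-tuple bool}.

Definition str (z : nat) (v : node z) : seq bool := tval (tagged v).

Definition depth (z : nat) (v : node z) : nat := nat_of_ord (tag v).

Definition anc_eq (z : nat) (u v : node z) : bool := prefix (str u) (str v).

Definition sanc (z : nat) (u v : node z) : bool :=
  anc_eq u v && (depth u < depth v)%N.

Definition Xv (z : nat) (b : {ffun node z -> bool}) (v : node z) : nat :=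
  if [exists u, sanc u v && b u] then 2%N
  else if b v then 1%N else 0%N.

(* probability of an event under independent Bernoulli(p v) variables B_v:
   the joint law is the product measure on {ffun node z -> bool}. *)
Definition Pr (R : realFieldType) (z : nat) (p : node z -> R)
    (E : pred {ffun node z -> bool}) : R :=
  \sum_(b : {ffun node z -> bool} | E b)
     \prod_(v : node z) (if b v then p v else 1 - p v).

Definition is_leaf (z : nat) (v : node z) : bool := depth v == z.-1.

Definition Wt (z : nat) (T : {set node z}) : nat :=
  #|[set l : node z | is_leaf l && [exists t in T, anc_eq t l]]|.

Definition antichain (z : nat) (T : {set node z}) : Prop :=
  forall u v, u \in T -> v \in T -> u != v -> ~~ anc_eq u v.

From HB Require Import structures.
From mathcomp Require Import all_boot all_order all_algebra.
From mathcomp Require Import zify ring lra.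
Import Order.TTheory GRing.Theory Num.Theory.
Local Open Scope ring_scope.

(* Let v be a deepest node of T, u its parent
   and s its sibling; put T2 := T \ {v, s} and T1 := {u} ∪ T2, again an
   antichain.  If every node of T is covered (has an ancestor-or-self w with
   B_w = 1), then either u is covered, hence T1 is, or B_v = 1, B_s = 1 when
   s ∈ T, and T2 is covered; as no node of T2 lies below v or s, the
   probability of the last event factorises.  Since P(B_v = 1) <=
   delta^(2 L_v), with L_v the number of leaves below v, and
   W(T) <= W(T2) + L_v + L_s, W(T) <= W(T1), induction gives
   P(T covered) <= 4^|T| delta^(2 W(T)) / 2 for nonempty T.  When s ∉ T, T1
   is as large as T, but then the leaves below s make W(T1) > W(T). *)

Set Implicit Arguments.
Unset Strict Implicit.

Section Prefix.
Variable A : eqType.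
Implicit Types s t r : seq A.

Lemma prefix_size_eq s t : prefix s t -> (size t <= size s)%N -> s = t.
Proof.
move=> /prefixP [r ->]; rewrite size_cat -[X in (_ <= X)%N]addn0 leq_add2l leqn0.
by move=> /nilP ->; rewrite cats0.
Qed.

Lemma prefix_total s r t : prefix s t -> prefix r t -> prefix s r || prefix r s.
Proof.
rewrite !prefixE => /eqP Es /eqP Er; case: (leqP (size s) (size r)) => s_r.
  by apply/orP; left; rewrite -[r in take _ r]Er take_takel // Es.
by apply/orP; right; rewrite -[s in take _ s]Es take_takel ?Er // ltnW.
Qed.

Lemma prefix_rcons_inv s t x : prefix s (rcons t x) -> s = rcons t x \/ prefix s t.
Proof.
move=> st; have := size_prefix st; rewrite size_rcons leq_eqVlt => /orP[/eqP E | lt_st].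
  by left; apply: prefix_size_eq => //; rewrite size_rcons E.
by right; move: st; rewrite !prefixE -cats1 takel_cat.
Qed.

Lemma prefix_rcons_nth s t : prefix s t -> (size s < size t)%N ->
  forall x0, prefix (rcons s (nth x0 t (size s))) t.
Proof.
by rewrite prefixE => /eqP Es st x0; rewrite prefixE size_rcons (take_nth x0 st) Es.
Qed.

End Prefix.

Section Tree.
Variable z : nat.
Implicit Types u v w t l : node z.

Definition mk_node (s : seq bool) (Hs : (size s < z)%N) : node z :=
  existT _ (Ordinal Hs) (@Tuple (size s) bool s (eqxx _)).

Lemma str_mk_node s Hs : str (@mk_node s Hs) = s. Proof. by []. Qed.

Lemma depthE v : depth v = size (str v).
Proof. by case: v => y t; rewrite /depth /str /= size_tuple. Qed.

Lemma depth_lt v : (depth v < z)%N.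
Proof. by case: v => y t; rewrite /depth. Qed.

Lemma str_inj : injective (@str z).
Proof.
case=> [y t] [y' t']; rewrite /str /= => E.
have Ey : y = y' by apply: val_inj; rewrite /= -(size_tuple t) -(size_tuple t') E.
by subst y'; have -> : t = t' by apply: val_inj.
Qed.

Lemma anc_eq_refl v : anc_eq v v. Proof. exact: prefix_refl. Qed.

Lemma anc_eq_trans u v w : anc_eq u v -> anc_eq v w -> anc_eq u w.
Proof. exact: prefix_trans. Qed.

Lemma anc_eq_depth u v : anc_eq u v -> (depth u <= depth v)%N.
Proof. by rewrite !depthE; apply: size_prefix. Qed.

Lemma anc_eq_depth_eq u v : anc_eq u v -> (depth v <= depth u)%N -> u = v.
Proof. by rewrite !depthE => uv vu; apply/str_inj/prefix_size_eq. Qed.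

Lemma anc_eq_total u w v : anc_eq u v -> anc_eq w v -> anc_eq u w || anc_eq w u.
Proof. exact: prefix_total. Qed.

Lemma anc_eq_child_inv u c y w : str c = rcons (str u) y ->
  anc_eq w c -> w = c \/ anc_eq w u.
Proof.
rewrite /anc_eq => Ec; rewrite Ec => /prefix_rcons_inv [E|]; last by right.
by left; apply: str_inj; rewrite E Ec.
Qed.

Lemma anc_eq_parent_inv u v s x w :
  str v = rcons (str u) x -> str s = rcons (str u) (~~ x) ->
  anc_eq u w -> [\/ w = u, anc_eq v w | anc_eq s w].
Proof.
rewrite /anc_eq => Ev Es uw; case: (ltnP (size (str u)) (size (str w))) => uw_size.
  have := prefix_rcons_nth uw uw_size false.
  case: (eqVneq (nth false (str w) (size (str u))) x) => [-> | /negPf y_x].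
    by rewrite -Ev => ?; apply: Or32.
  have -> : nth false (str w) (size (str u)) = ~~ x.
    by move: y_x; case: (nth _ _ _); case: (x).
  by rewrite -Es => ?; apply: Or33.
by apply: Or31; apply/str_inj/esym/prefix_size_eq.
Qed.

Definition leaves_below v := [set l | is_leaf l && anc_eq v l].

Lemma card_leaves_below v : (#|leaves_below v| <= 2 ^ (z.-1 - depth v))%N.
Proof.
pose k := (z.-1 - depth v)%N.
pose f l := [ffun i : 'I_k => nth false (str l) (depth v + i)].
rewrite -(card_in_imset (f := f)).
  by apply: leq_trans (max_card _) _; rewrite card_ffun card_bool card_ord.
move=> l1 l2; rewrite !inE => /andP[/eqP L1 A1] /andP[/eqP L2 A2] /ffunP E12.
have dv : (depth v <= z.-1)%N by rewrite -L1 anc_eq_depth.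
apply: str_inj; apply: (@eq_from_nth _ false); first by rewrite -!depthE L1 L2.
move=> j; rewrite -depthE L1 => jz; case: (ltnP j (depth v)) => jv.
  have jv' : (j < size (str v))%N by rewrite -depthE.
  move: A1 A2; rewrite /anc_eq !prefixE => /eqP E1 /eqP E2.
  by rewrite -(nth_take _ jv' (str l1)) E1 -(nth_take _ jv' (str l2)) E2.
have ik : (j - depth v < k)%N by rewrite /k; lia.
have := E12 (Ordinal ik); rewrite !ffunE /=.
by have -> : (depth v + (j - depth v) = j)%N by lia.
Qed.

Lemma leaves_below_neq0 v : leaves_below v != set0.
Proof.
pose s := str v ++ nseq (z.-1 - depth v) false.
have ls : size s = z.-1.
  by rewrite size_cat size_nseq -depthE subnKC // -ltnS prednK ?depth_lt //;
    apply: leq_ltn_trans (depth_lt v).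
have sz : (size s < z)%N by rewrite ls prednK ?ltnSn //; apply: leq_ltn_trans (depth_lt v).
apply/set0Pn; exists (mk_node sz); rewrite inE /is_leaf depthE str_mk_node ls eqxx.
exact: prefix_prefix.
Qed.

Lemma Wt_set0 : Wt (set0 : {set node z}) = 0%N.
Proof.
apply/eqP; rewrite cards_eq0; apply/eqP/setP => l; rewrite !inE.
by case: (is_leaf l) => //=; apply/negbTE/existsP => -[t]; rewrite inE.
Qed.

Definition dominated_by (T T' : {set node z}) :=
  forall t, t \in T -> exists2 t', t' \in T' & anc_eq t' t.

Let leaves_dominated (T T' : {set node z}) : dominated_by T T' ->
  [set l | is_leaf l && [exists t in T, anc_eq t l]] \subset
  [set l | is_leaf l && [exists t in T', anc_eq t l]].
Proof.
move=> TT'; apply/subsetP => l; rewrite !inE => /andP[-> /existsP[t /andP[tT tl]]].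
have [t' t'T t't] := TT' t tT.
by apply/existsP; exists t'; rewrite t'T (anc_eq_trans t't tl).
Qed.

Lemma Wt_le (T T' : {set node z}) : dominated_by T T' -> (Wt T <= Wt T')%N.
Proof. by move=> /leaves_dominated; apply: subset_leq_card. Qed.

Lemma Wt_lt (T T' : {set node z}) l : dominated_by T T' -> is_leaf l ->
  [exists t' in T', anc_eq t' l] -> ~~ [exists t in T, anc_eq t l] -> (Wt T < Wt T')%N.
Proof.
move=> TT' l_leaf lT' lT; apply/proper_card/properP; split; first exact: leaves_dominated.
by exists l; rewrite inE l_leaf.
Qed.

Lemma Wt_setD1 (T : {set node z}) x : (Wt T <= Wt (T :\ x) + #|leaves_below x|)%N.
Proof.
apply: leq_trans (leq_card_setU _ _).1.
apply/subset_leq_card/subsetP => l; rewrite !inE.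
move=> /andP[L /existsP[t /andP[tT tl]]]; rewrite L /=.
case: (eqVneq t x) => [<- | tx]; first by rewrite tl orbT.
by apply/orP; left; apply/existsP; exists t; rewrite !inE tx tT tl.
Qed.

Lemma card_le_Wt (T : {set node z}) :
  (forall v, v \in T -> is_leaf v) -> (#|T| <= Wt T)%N.
Proof.
move=> TL; apply/subset_leq_card/subsetP => t tT; rewrite !inE TL //=.
by apply/existsP; exists t; rewrite tT anc_eq_refl.
Qed.

Definition covered (T : {set node z}) (b : {ffun node z -> bool}) :=
  [forall t in T, [exists u, anc_eq u t && b u]].

Lemma Xv_in12 b v :
  ((Xv b v == 1%N) || (Xv b v == 2%N)) = [exists u, anc_eq u v && b u].
Proof.
rewrite /Xv; case: ifP => [/existsP[u /andP[/andP[uv _] bu]] | no_sanc].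
  by apply/esym/existsP; exists u; rewrite uv bu.
case bv: (b v) => /=; first by apply/esym/existsP; exists v; rewrite anc_eq_refl bv.
apply/esym/negbTE/existsP => -[u /andP[uv bu]].
case: (ltnP (depth u) (depth v)) => duv.
  by move/negbT/existsP: no_sanc; apply; exists u; rewrite /sanc uv duv bu.
by move: bu; rewrite (anc_eq_depth_eq uv duv) bv.
Qed.

End Tree.

Section ProductMeasure.
Variables (R : realFieldType) (z : nat) (p : node z -> R).
Hypotheses (p_ge0 : forall v, 0 <= p v) (p_le1 : forall v, p v <= 1).
Implicit Types (E F : pred {ffun node z -> bool}) (b : {ffun node z -> bool}).

Let mass b := \prod_(v : node z) (if b v then p v else 1 - p v).

Let mass_ge0 b : 0 <= mass b.
Proof. by apply: prodr_ge0 => v _; case: (b v); rewrite ?subr_ge0. Qed.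

Lemma Pr_ge0 E : 0 <= Pr p E.
Proof. by apply: sumr_ge0 => b _; apply: mass_ge0. Qed.

Lemma eq_Pr E F : E =1 F -> Pr p E = Pr p F.
Proof. by move=> EF; apply: eq_bigl. Qed.

Lemma Pr_le E F : (forall b, E b -> F b) -> Pr p E <= Pr p F.
Proof.
move=> EF; rewrite /Pr [X in _ <= X]big_mkcond [X in X <= _]big_mkcond.
apply: ler_sum => b _; case Eb: (E b); first by rewrite (EF _ Eb).
by case: (F b) => //; apply: mass_ge0.
Qed.

Lemma Pr_orb E F : Pr p (fun b => E b || F b) <= Pr p E + Pr p F.
Proof.
rewrite /Pr (big_mkcond E) (big_mkcond F) (big_mkcond (fun b => E b || F b)).
rewrite -big_split /=; apply: ler_sum => b _.
by case: (E b); case: (F b); rewrite /= ?addr0 ?add0r ?lerDl //; apply: mass_ge0.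
Qed.

Lemma Pr_predT : Pr p predT = 1.
Proof.
rewrite /Pr -(bigA_distr_bigA (fun v (x : bool) => if x then p v else 1 - p v)).
by apply: big1 => v _; rewrite big_bool /= addrC subrK.
Qed.

Lemma Pr_le1 E : Pr p E <= 1.
Proof. by rewrite -Pr_predT; apply: Pr_le. Qed.

Definition toggle b i := [ffun j => if j == i then ~~ b j else b j].

Lemma toggleK i : involutive (toggle^~ i).
Proof.
by move=> b; apply/ffunP => j; rewrite !ffunE; case: eqP => // ->; rewrite negbK.
Qed.

Let mass_toggle b i : b i -> (1 - p i) * mass b = p i * mass (toggle b i).
Proof.
move=> bi; rewrite /mass (bigD1 i) // [in RHS](bigD1 i) //= ffunE eqxx bi /=.
under [in RHS]eq_bigr => j /negPf ji do rewrite ffunE ji.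
by rewrite mulrCA.
Qed.

Lemma Pr_andb_coord E i : (forall b, E (toggle b i) = E b) ->
  Pr p (fun b => E b && b i) = p i * Pr p E.
Proof.
move=> Ei; rewrite /Pr [in RHS](bigID (fun b => b i)) /=.
have -> : \sum_(b | E b && ~~ b i) mass b = \sum_(b | E b && b i) mass (toggle b i).
  rewrite [RHS](reindex_inj (can_inj (toggleK i))) /=.
  by apply: eq_big => [b | b _]; rewrite ?toggleK // Ei ffunE eqxx.
rewrite mulrDr [X in _ = _ + X]mulr_sumr.
under [X in _ = _ + X]eq_bigr => b /andP[_ bi] do rewrite -(mass_toggle bi).
by rewrite -mulr_sumr; ring.
Qed.

Lemma Pr_coord i : Pr p (fun b => b i) = p i.
Proof. by rewrite -[RHS]mulr1 -Pr_predT -Pr_andb_coord. Qed.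

Lemma covered_toggle (T : {set node z}) x b :
  (forall t, t \in T -> ~~ anc_eq x t) -> covered T (toggle b x) = covered T b.
Proof.
move=> xT; apply: eq_forallb_in => t tT; apply: eq_existsb => u.
rewrite ffunE; case: eqP => [-> | _] //; by rewrite (negPf (xT t tT)).
Qed.

End ProductMeasure.

Section CoverBound.
Variables (R : realFieldType) (delta : R).
Hypotheses (delta_gt0 : 0 < delta) (delta_le_half : delta <= 2^-1).

Definition cover_bound (n W : nat) : R := 4 ^+ n * delta ^+ (2 * W).

Lemma cover_bound_ge0 n W : 0 <= cover_bound n W.
Proof. by apply: mulr_ge0; apply: exprn_ge0; move: delta_gt0; lra. Qed.

Lemma expr_delta_le m n : (m <= n)%N -> delta ^+ n <= delta ^+ m.
Proof. by move=> mn; apply: ler_wiXn2l => //; move: delta_gt0 delta_le_half; lra. Qed.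

Lemma cover_bound_le n n' W W' : (n <= n')%N -> (W' <= W)%N ->
  cover_bound n W <= cover_bound n' W'.
Proof.
move=> nn' WW'; apply: ler_pM; rewrite ?exprn_ge0 //; try (move: delta_gt0; lra).
- by apply: ler_weXn2l => //; lra.
- by apply: expr_delta_le; rewrite leq_mul2l WW' orbT.
Qed.

Lemma cover_boundS n W : cover_bound n.+1 W = 4 * cover_bound n W.
Proof. by rewrite /cover_bound exprS mulrA. Qed.

Lemma cover_bound_leS n W : 4 * cover_bound n W.+1 <= cover_bound n W.
Proof.
have -> : 4 * cover_bound n W.+1 = (4 * delta ^+ 2) * cover_bound n W.
  by rewrite /cover_bound mulnS exprD; ring.
apply: ler_piMl; first exact: cover_bound_ge0.
by move: delta_gt0 delta_le_half; rewrite expr2; nra.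
Qed.

Lemma cover_bound_mul L n W :
  delta ^+ (2 * L) * cover_bound n W = cover_bound n (L + W).
Proof. by rewrite /cover_bound mulnDr exprD; ring. Qed.

End CoverBound.

Lemma sub_antichain (z : nat) (T T' : {set node z}) :
  T' \subset T -> antichain T -> antichain T'.
Proof. by move=> /subsetP sT'T T_anti u v /sT'T uT /sT'T vT; apply: T_anti. Qed.

Definition depth_sum (z : nat) (T : {set node z}) := (\sum_(t in T) (depth t).+1)%N.

Lemma depth_sum_sub (z : nat) (T T' : {set node z}) :
  T' \subset T -> (depth_sum T' <= depth_sum T)%N.
Proof.
by move=> sT'T; rewrite [X in (_ <= X)%N](big_setID T') /= (setIidPr sT'T) leq_addr.
Qed.

Lemma depth_sumD1 (z : nat) (T : {set node z}) x :
  x \in T -> depth_sum T = ((depth x).+1 + depth_sum (T :\ x))%N.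
Proof. exact: big_setD1. Qed.

Section Covering.
Variables (R : realFieldType) (z : nat) (delta : R) (p : node z -> R).
Hypotheses (delta_gt0 : 0 < delta) (delta_le_half : delta <= 2^-1).
Hypotheses (p_ge0 : forall v, 0 <= p v)
  (p_le : forall v, p v <= delta ^+ (2 ^ (z - depth v))).

Let bound := cover_bound delta.

Lemma p_le_leaves v : p v <= delta ^+ (2 * #|leaves_below v|).
Proof.
apply: le_trans (p_le v) (expr_delta_le delta_gt0 delta_le_half _).
have -> : (z - depth v = (z.-1 - depth v).+1)%N by have := depth_lt v; lia.
by rewrite expnS leq_mul2l card_leaves_below orbT.
Qed.

Lemma p_le1 v : p v <= 1.
Proof.
apply: le_trans (p_le_leaves v) _.
by rewrite -(expr0 delta); apply: expr_delta_le.
Qed.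

Lemma Pr_covered_le_bound (T : {set node z}) :
  (T != set0 -> Pr p (covered T) <= 2^-1 * bound #|T| (Wt T)) ->
  Pr p (covered T) <= bound #|T| (Wt T).
Proof.
case: (eqVneq T set0) => [-> _ | _ /(_ isT) hT].
  by rewrite cards0 Wt_set0 /bound /cover_bound muln0 !expr0 mulr1 (Pr_le1 p_ge0 p_le1).
apply: le_trans hT _; rewrite ler_pdivrMl ?ler_peMl ?cover_bound_ge0 //; lra.
Qed.

Lemma p_mul_bound_le c P n W : 0 <= P -> P <= bound n W ->
  p c * P <= bound n (#|leaves_below c| + W).
Proof.
move=> P_ge0 P_le; rewrite /bound -cover_bound_mul.
by apply: ler_pM => //; apply: p_le_leaves.
Qed.

Lemma Pr_covered_root (T : {set node z}) v : v \in T -> depth v = 0%N ->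
  (forall t, t \in T -> (depth t <= depth v)%N) ->
  Pr p (covered T) <= 2^-1 * bound #|T| (Wt T).
Proof.
move=> vT v_root v_deepest.
have v_anc t : anc_eq v t.
  by rewrite /anc_eq (size0nil (etrans (esym (depthE v)) v_root)) prefix0s.
have T_v : T :\ v = set0.
  apply/setP => t; rewrite !inE; case: (boolP (t \in T)) => [tT | _]; rewrite ?andbF //.
  by rewrite (anc_eq_depth_eq (v_anc t) (v_deepest t tT)) eqxx.
have cT : #|T| = 1%N by rewrite (cardsD1 v T) vT T_v cards0.
have WT : (Wt T <= #|leaves_below v|)%N by have := Wt_setD1 T v; rewrite T_v Wt_set0.
have Pr_T : Pr p (covered T) <= p v.
  rewrite -(Pr_coord p v); apply: (Pr_le p_ge0 p_le1) => b.
  move=> /forall_inP /(_ v vT) /existsP [u /andP[uv bu]].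
  by rewrite -(anc_eq_depth_eq uv) // v_root.
apply: le_trans Pr_T (le_trans (p_le_leaves v) _).
apply: le_trans (expr_delta_le delta_gt0 delta_le_half (_ : 2 * Wt T <= 2 * _)%N) _.
  by rewrite leq_mul2l WT orbT.
by rewrite cT /bound /cover_bound expr1 mulrA ler_peMl ?exprn_ge0 //; move: delta_gt0; lra.
Qed.

Section Step.
Variables (T : {set node z}) (v u s : node z) (x : bool).
Hypotheses (T_anti : antichain T) (vT : v \in T)
  (v_deepest : forall t, t \in T -> (depth t <= depth v)%N)
  (Ev : str v = rcons (str u) x) (Es : str s = rcons (str u) (~~ x)).
Hypothesis IH_half : forall T', (depth_sum T' < depth_sum T)%N -> antichain T' ->
  T' != set0 -> Pr p (covered T') <= 2^-1 * bound #|T'| (Wt T').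

Let T2 := T :\ v :\ s.
Let T1 := u |: T2.

Let depth_v : depth v = (depth u).+1.
Proof. by rewrite !depthE Ev size_rcons. Qed.

Let depth_s : depth s = (depth u).+1.
Proof. by rewrite !depthE Es size_rcons. Qed.

Let u_anc_v : anc_eq u v. Proof. by rewrite /anc_eq Ev prefix_rcons. Qed.
Let u_anc_s : anc_eq u s. Proof. by rewrite /anc_eq Es prefix_rcons. Qed.

Let s_neq_v : s != v.
Proof.
apply/eqP => sv; have := congr1 (fun w => last x (str w)) sv.
by rewrite /= Ev Es !last_rcons; case: (x).
Qed.

Let u_notin_T : u \notin T.
Proof.
have u_neq_v : u != v by apply/eqP => uv; move: depth_v; rewrite -uv; apply: n_Sn.
by apply/negP => uT; have := T_anti uT vT u_neq_v; rewrite u_anc_v.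
Qed.

Let deepest_desc c t : (depth v <= depth c)%N -> t \in T -> anc_eq c t -> t = c.
Proof.
by move=> vc tT ct; apply/esym/anc_eq_depth_eq => //; apply: leq_trans (v_deepest tT) vc.
Qed.

Let inT2 t : (t \in T2) = [&& t != s, t != v & t \in T].
Proof. by rewrite !inE. Qed.

Let T2_not_below_v t : t \in T2 -> ~~ anc_eq v t.
Proof.
by rewrite inT2 => /and3P[_ tv tT]; apply: contra tv => /(deepest_desc (leqnn _) tT) ->.
Qed.

Let T2_not_below_s t : t \in T2 -> ~~ anc_eq s t.
Proof.
rewrite inT2 => /and3P[ts _ tT]; apply: contra ts => /(deepest_desc _ tT) -> //.
by rewrite depth_s depth_v.
Qed.

Let antichain_T1 : antichain T1.
Proof.
move=> a c; rewrite in_setU1 inT2 => /orP[/eqP-> | /and3P[a_s a_v aT]].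
  rewrite in_setU1 inT2 => /orP[/eqP-> | /and3P[c_s c_v cT]]; first by rewrite eqxx.
  move=> _; apply: contraNN c_v => /(anc_eq_parent_inv Ev Es) [c_u | c_v' | c_s'].
  - by move: u_notin_T; rewrite -c_u cT.
  - by rewrite (deepest_desc _ cT c_v').
  - by move: c_s; rewrite (deepest_desc _ cT c_s') ?depth_s ?depth_v ?eqxx.
rewrite in_setU1 inT2 => /orP[/eqP-> | /and3P[_ _ cT]]; last exact: T_anti.
by move=> _; apply: contraNN (T_anti aT vT a_v) => /anc_eq_trans; apply.
Qed.

Let depth_sum_T2 : (depth_sum T2 < depth_sum T)%N.
Proof.
have : (depth_sum T2 <= depth_sum (T :\ v))%N by apply/depth_sum_sub/subD1set.
by rewrite (depth_sumD1 vT) addSn ltnS => /leq_trans; apply; rewrite leq_addl.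
Qed.

Let depth_sum_T1 : (depth_sum T1 < depth_sum T)%N.
Proof.
have : (depth_sum T2 <= depth_sum (T :\ v))%N by apply/depth_sum_sub/subD1set.
have -> : depth_sum T1 = ((depth u).+1 + depth_sum T2)%N.
  by rewrite /depth_sum big_setU1 // inT2 (negPf u_notin_T) !andbF.
by rewrite (depth_sumD1 vT) depth_v [X in (_ < X)%N]addSnnS ltn_add2l ltnS.
Qed.

Let covered_split b : covered T b ->
  covered T1 b || (covered T2 b && b v) && ((s \in T) ==> b s).
Proof.
move=> /forall_inP covT.
case: (boolP [exists w, anc_eq w u && b w]) => [u_set | u_unset].
  apply/orP; left; apply/forall_inP => t.
  by rewrite in_setU1 inT2 => /orP[/eqP-> // | /and3P[_ _ /covT]].
have child_set c y : str c = rcons (str u) y -> c \in T -> b c.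
  move=> Ec /covT /existsP[w /andP[wc bw]].
  case: (anc_eq_child_inv Ec wc) => [<- // | wu].
  by move: u_unset => /existsP []; exists w; rewrite wu bw.
apply/orP; right; rewrite (child_set _ _ Ev vT) andbT.
apply/andP; split; last by apply/implyP; exact: child_set Es.
by apply/forall_inP => t; rewrite inT2 => /and3P[_ _ /covT].
Qed.

Let Pr_covered_le_split : Pr p (covered T) <= Pr p (covered T1) +
  Pr p (fun b => (covered T2 b && b v) && ((s \in T) ==> b s)).
Proof. exact: le_trans (Pr_le p_ge0 p_le1 covered_split) (Pr_orb p_ge0 p_le1 _ _). Qed.

Let Pr_covered_T2_v : Pr p (fun b => covered T2 b && b v) = p v * Pr p (covered T2).
Proof. by apply: Pr_andb_coord => b; apply: covered_toggle. Qed.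

Let Pr_covered_T2_vs :
  Pr p (fun b => (covered T2 b && b v) && b s) = p s * (p v * Pr p (covered T2)).
Proof.
rewrite -Pr_covered_T2_v; apply: Pr_andb_coord => b.
by rewrite covered_toggle // ffunE eq_sym (negPf s_neq_v).
Qed.

Let T1_dominates : dominated_by T T1.
Proof.
move=> t tT; case: (eqVneq t v) => [-> | tv]; first by exists u; rewrite ?setU11.
case: (eqVneq t s) => [-> | ts]; first by exists u; rewrite ?setU11.
by exists t; rewrite ?anc_eq_refl // in_setU1 inT2 ts tv tT orbT.
Qed.

Let Wt_le_T2 : (Wt T <= Wt T2 + #|leaves_below v| + #|leaves_below s|)%N.
Proof. by apply: leq_trans (Wt_setD1 T v) _; rewrite addnAC leq_add2r Wt_setD1. Qed.

Let Wt_lt_T1 : s \notin T -> (Wt T < Wt T1)%N.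
Proof.
move=> sT; have [l] := set0Pn _ (leaves_below_neq0 s); rewrite inE => /andP[l_leaf s_l].
apply: (Wt_lt T1_dominates l_leaf).
  by apply/existsP; exists u; rewrite setU11 (anc_eq_trans u_anc_s s_l).
apply/existsP => -[t /andP[tT t_l]].
case/orP: (anc_eq_total t_l s_l) => [t_s | s_t].
  case: (anc_eq_child_inv Es t_s) => [t_eq_s | t_u]; first by move: sT; rewrite -t_eq_s tT.
  have t_neq_v : t != v.
    by apply/eqP => tv; move: (anc_eq_depth t_u); rewrite tv depth_v ltnn.
  by have := T_anti tT vT t_neq_v; rewrite (anc_eq_trans t_u u_anc_v).
by move: sT; rewrite -(deepest_desc _ tT s_t) ?tT // depth_s depth_v.
Qed.

Let Pr_covered_T1 : Pr p (covered T1) <= 2^-1 * bound #|T1| (Wt T1).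
Proof.
by apply: IH_half depth_sum_T1 antichain_T1 _; apply/set0Pn; exists u; rewrite setU11.
Qed.

Let Pr_covered_T2 : Pr p (covered T2) <= bound #|T2| (Wt T2).
Proof.
apply: Pr_covered_le_bound => T2_n0; apply: IH_half depth_sum_T2 _ T2_n0.
by apply: sub_antichain T_anti; apply: subset_trans (subD1set _ s) (subD1set _ v).
Qed.

Let card_T1 : #|T1| = #|T2|.+1.
Proof. by rewrite cardsU1 inT2 (negPf u_notin_T) !andbF. Qed.

Let card_T : #|T| = ((s \in T) + #|T2|.+1)%N.
Proof. by rewrite (cardsD1 v T) vT (cardsD1 s (T :\ v)) !inE s_neq_v add1n addnS. Qed.

Let Pr_v_T2 : p v * Pr p (covered T2) <= bound #|T2| (#|leaves_below v| + Wt T2).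
Proof. exact: p_mul_bound_le (Pr_ge0 p_ge0 p_le1 _) Pr_covered_T2. Qed.

Let Pr_covered_sibling_in : s \in T -> Pr p (covered T) <= 2^-1 * bound #|T| (Wt T).
Proof.
move=> sT; set n := #|T2|; set W := Wt T.
have PT : Pr p (covered T) <= Pr p (covered T1) + p s * (p v * Pr p (covered T2)).
  by move: Pr_covered_le_split; rewrite sT /= Pr_covered_T2_vs.
have PT2 : p s * (p v * Pr p (covered T2)) <= bound n W.
  apply: le_trans (p_mul_bound_le s (mulr_ge0 (p_ge0 v) (Pr_ge0 p_ge0 p_le1 _)) Pr_v_T2) _.
  apply: cover_bound_le => //; apply: leq_trans Wt_le_T2 _.
  by rewrite addnC [(Wt T2 + _)%N]addnC.
have PT1 : Pr p (covered T1) <= 2^-1 * bound n.+1 W.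
  apply: le_trans Pr_covered_T1 _; rewrite card_T1 ler_pM2l ?invr_gt0 ?ltr0n //.
  exact: cover_bound_le (Wt_le T1_dominates).
have := cover_bound_ge0 delta_gt0 n W.
move: PT PT2 PT1; rewrite card_T sT add1n /bound !cover_boundS; lra.
Qed.

Let Pr_covered_sibling_notin : s \notin T ->
  Pr p (covered T) <= 2^-1 * bound #|T| (Wt T).
Proof.
move=> sT; set n := #|T2|; set W := Wt T.
have PT : Pr p (covered T) <= Pr p (covered T1) + p v * Pr p (covered T2).
  move: Pr_covered_le_split; rewrite (negPf sT) -Pr_covered_T2_v.
  have -> // : Pr p (fun b => (covered T2 b && b v) && (false ==> b s)) =
               Pr p (fun b => covered T2 b && b v).
  by apply: eq_Pr => b; rewrite andbT.
have PT2 : p v * Pr p (covered T2) <= bound n W.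
  have T2E : T2 = T :\ v.
    by apply/setDidPl; rewrite disjoint_sym disjoints1 !inE (negPf sT) andbF.
  by apply: le_trans Pr_v_T2 _; apply: cover_bound_le; rewrite // T2E addnC Wt_setD1.
have PT1 : 4 * Pr p (covered T1) <= 2^-1 * bound n.+1 W.
  apply: le_trans (_ : 4 * (2^-1 * bound n.+1 W.+1) <= _).
    rewrite ler_pM2l ?ltr0n //; apply: le_trans Pr_covered_T1 _.
    by rewrite card_T1 ler_pM2l ?invr_gt0 ?ltr0n //; exact: cover_bound_le (Wt_lt_T1 sT).
  by rewrite mulrCA ler_pM2l ?invr_gt0 ?ltr0n // cover_bound_leS.
have := cover_bound_ge0 delta_gt0 n W.
move: PT PT2 PT1; rewrite card_T (negPf sT) add0n /bound !cover_boundS; lra.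
Qed.

Lemma Pr_covered_step : Pr p (covered T) <= 2^-1 * bound #|T| (Wt T).
Proof.
by case: (boolP (s \in T)); [exact: Pr_covered_sibling_in | exact: Pr_covered_sibling_notin].
Qed.

End Step.

Lemma Pr_covered_half (T : {set node z}) : antichain T -> T != set0 ->
  Pr p (covered T) <= 2^-1 * bound #|T| (Wt T).
Proof.
have [k] := ubnP (depth_sum T); elim: k T => // k IH T /ltnSE le_T_k T_anti /set0Pn[t0 t0T].
case: (arg_maxnP (@depth z) t0T) => v vT v_deepest.
case/lastP E: (str v) => [|su x].
  by apply: (Pr_covered_root vT _ v_deepest); rewrite depthE E.
have lt_u : (size su < z)%N by have := depth_lt v; rewrite depthE E size_rcons => /ltnW.
have lt_s : (size (rcons su (~~ x)) < z)%N.
  by have := depth_lt v; rewrite depthE E !size_rcons.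
have Ev : str v = rcons (str (mk_node lt_u)) x by rewrite E.
have Es : str (mk_node lt_s) = rcons (str (mk_node lt_u)) (~~ x) by [].
apply: (Pr_covered_step T_anti vT v_deepest Ev Es) => T' lt_T'.
exact/IH/leq_trans/le_T_k.
Qed.

End Covering.

Unset Implicit Arguments.
Set Strict Implicit.

Theorem mainTheorem5 (R : realFieldType) (z : nat) (delta : R)
  (p : node z -> R) (T : {set node z}) :
  (1 <= z)%N ->
  0 < delta -> delta <= 2^-1 ->
  (forall v, 0 <= p v) ->
  (forall v, p v <= delta ^+ (2 ^ (z - depth v))) ->
  antichain T ->
  Pr p (fun b => [forall v in T, (Xv b v == 1%N) || (Xv b v == 2%N)])
    <= 4 * 4 ^+ #|T| * delta ^+ (2 * Wt T)
  /\
  ((forall v, v \in T -> is_leaf v) ->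
   Pr p (fun b => [forall v in T, (Xv b v == 1%N) || (Xv b v == 2%N)])
    <= (2 * delta) ^+ (2 * #|T|)).
Proof.
move=> _ delta_gt0 delta_le_half p_ge0 p_le T_anti.
have -> : Pr p (fun b => [forall v in T, (Xv b v == 1%N) || (Xv b v == 2%N)]) =
          Pr p (covered T).
  by apply: eq_Pr => b; apply: eq_forallb_in => v _; apply: Xv_in12.
have PT := Pr_covered_le_bound delta_gt0 delta_le_half p_ge0 p_le
  (Pr_covered_half delta_gt0 delta_le_half p_ge0 p_le T_anti).
split => [| T_leaves].
  apply: le_trans PT _; rewrite -mulrA ler_peMl ?cover_bound_ge0 //; lra.
apply: le_trans PT _.
have -> : (2 * delta) ^+ (2 * #|T|) = cover_bound delta #|T| #|T|.
  by rewrite /cover_bound exprMn [in LHS]exprM expr2 -natrM.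
exact: cover_bound_le (card_le_Wt T_leaves).
Qed.
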